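(* Let $\gamma\in(0,1)$. There is a constant $c_3>0$, a polynomial in $\|D_x\|_\infty,\|D_u\|_\infty,\kappa,\gamma^{-1},\bar w$ (independent of $n,m,H,t$), such that with $\epsilon_3(H)=c_3\sqrt n(1-\gamma)^H$ the following holds. For any $K\in\mathcal K$, the disturbance-action parameter $\bm M(K)=(M^{[1]}(K),\dots,M^{[H]}(K))$ defined by $M^{[i]}(K)=(\mathbb K-K)(A-BK)^{i-1}$ belongs to $\mathcal M$, and for all $t$ and all disturbance sequences in $\mathcal W$, $$\max\big(\|D_x[x_t^K-x_t^{\bm M(K)}]\|_\infty,\ \|D_u[u_t^K-u_t^{\bm M(K)}]\|_\infty\big)\le\epsilon_3(H),$$ where $(x_t^K,u_t^K)$ is produced by the controller $u_t=-Kx_t$ and $(x_t^{\bm M(K)},u_t^{\bm M(K)})$ by the disturbance-action policy with constant parameter $\bm M(K)$, under the same disturbances. Hence $\bm M(K)$ is $\epsilon_3(H)$-loosely safe.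
   Context: System $x_{t+1}=Ax_t+Bu_t+w_t$, $A\in\mathbb R^{n\times n}$, $B\in\mathbb R^{n\times m}$, $x_0=0$, $t=0,\dots,T$; $\mathcal W=\{w:\|w\|_\infty\le\bar w\}$, $\bar w>0$. $\mathcal X=\{x:D_xx\le d_x\}$, $\mathcal U=\{u:D_uu\le d_u\}$ with $D_x\in\mathbb R^{k_x\times n}$, $D_u\in\mathbb R^{k_u\times m}$ (entrywise inequalities; $\mathds1$ all-ones vector; matrix $\|\cdot\|_\infty$ = max absolute row sum, $\|\cdot\|_2$ spectral norm). $K$ is $(\kappa,\gamma)$-strongly stable ($\kappa\ge1$) if $A-BK=Q^{-1}LQ$ with $\|L\|_2\le1-\gamma$, $\max(\|Q\|_2,\|Q^{-1}\|_2,\|K\|_2)\le\kappa$. A controller is safe if $x_t\in\mathcal X$, $u_t\in\mathcal U$ for all $0\le t\le T$ and all disturbance sequences in $\mathcal W$, and $\epsilon$-loosely safe if $D_xx_t\le d_x+\epsilon\mathds1$ and $D_uu_t\le d_u+\epsilon\mathds1$ for all such $t$ and disturbances. $\mathcal K$ = set of $K$ such that $u_t=-Kx_t$ is safe and $K$ is $(\kappa,\gamma)$-strongly stable. Fix a $(\kappa,\gamma)$-strongly stable $\mathbb K$. Disturbance-action policy with parameter $\bm M=(M^{[1]},\dots,M^{[H]})$: $u_t=-\mathbb Kx_t+\sum_{i=1}^HM^{[i]}w_{t-i}$ with $w_s=0$ for $s<0$. $\mathcal M=\{\bm M:\|M^{[i]}\|_\infty\le2\sqrt n\kappa^3(1-\gamma)^{i-1},\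 1\le i\le H\}$. *)

From HB Require Import structures.
From mathcomp Require Import all_boot all_order all_algebra.
From mathcomp Require Import classical_sets reals.
From mathcomp Require mpoly.

Set Implicit Arguments.
Unset Strict Implicit.
Unset Printing Implicit Defensive.

Import Order.TTheory GRing.Theory Num.Theory.
Local Open Scope ring_scope.
Local Open Scope classical_set_scope.

Section ControlDefs.
Variable R : realType.

(* matrix infinity norm = max absolute row sum (for a column vector this is
   the max absolute entry) *)
Definition ninf (p q : nat) (A : 'M[R]_(p, q)) : R :=
  \big[Num.max/0]_(i < p) \sum_(j < q) `|A i j|.

Definition norm2 (q : nat) (x : 'cV[R]_q) : R :=
  Num.sqrt (\sum_(j < q) (x j 0) ^+ 2).

Definition spec_norm (p q : nat) (A : 'M[R]_(p, q)) : R :=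
  sup [set norm2 (A *m x) | x in [set x : 'cV[R]_q | norm2 x <= 1]].

Definition entry_le_eps (k : nat) (a b : 'cV[R]_k) (eps : R) : Prop :=
  forall i : 'I_k, a i 0 <= b i 0 + eps.

Definition strongly_stable (n m : nat) (A : 'M[R]_n) (B : 'M[R]_(n, m))
    (K : 'M[R]_(m, n)) (kappa gamma : R) : Prop :=
  exists (Q L : 'M[R]_n),
    [/\ Q \in unitmx, A - B *m K = invmx Q *m L *m Q,
        spec_norm L <= 1 - gamma &
        [/\ spec_norm Q <= kappa, spec_norm (invmx Q) <= kappa &
            spec_norm K <= kappa]].

Definition admissible (n : nat) (wbar : R) (w : nat -> 'cV[R]_n) : Prop :=
  forall t, ninf (w t) <= wbar.

Fixpoint traj (n m : nat) (A : 'M[R]_n) (B : 'M[R]_(n, m))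
    (pol : nat -> 'cV[R]_n -> 'cV[R]_m) (w : nat -> 'cV[R]_n) (t : nat)
    : 'cV[R]_n :=
  match t with
  | 0 => 0
  | s.+1 => let x := traj A B pol w s in A *m x + B *m pol s x + w s
  end.

Definition lin_pol (n m : nat) (K : 'M[R]_(m, n)) : nat -> 'cV[R]_n -> 'cV[R]_m :=
  fun _ x => - (K *m x).

(* w_{t-i}, with w_s = 0 for s < 0 *)
Definition wpast (n : nat) (w : nat -> 'cV[R]_n) (t i : nat) : 'cV[R]_n :=
  if (i <= t)%N then w (t - i)%N else 0.

(* disturbance-action policy u_t = -KK x_t + sum_{i=1}^H M^[i] w_{t-i};
   M i stands for M^[i] (only 1 <= i <= H is used) *)
Definition dap_pol (n m H : nat) (KK : 'M[R]_(m, n)) (M : nat -> 'M[R]_(m, n))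
    (w : nat -> 'cV[R]_n) : nat -> 'cV[R]_n -> 'cV[R]_m :=
  fun t x => - (KK *m x) + \sum_(1 <= i < H.+1) M i *m wpast w t i.

Definition xK n m A B (K : 'M[R]_(m, n)) w t : 'cV[R]_n := traj A B (lin_pol K) w t.
Definition uK n m A B (K : 'M[R]_(m, n)) w t : 'cV[R]_m := lin_pol K t (xK A B K w t).

Definition xM n m (A : 'M[R]_n) (B : 'M[R]_(n, m)) H KK M w t : 'cV[R]_n :=
  traj A B (dap_pol H KK M w) w t.
Definition uM n m (A : 'M[R]_n) (B : 'M[R]_(n, m)) H KK M w t : 'cV[R]_m :=
  dap_pol H KK M w t (xM A B H KK M w t).

(* u_t = -Kx_t is safe (with eps-slack: eps-loosely safe; eps = 0: safe) *)
Definition lin_loosely_safe n m kx ku (A : 'M[R]_n) (B : 'M[R]_(n, m))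
    (Dx : 'M[R]_(kx, n)) (dx : 'cV[R]_kx) (Du : 'M[R]_(ku, m)) (du : 'cV[R]_ku)
    (wbar : R) (T : nat) (K : 'M[R]_(m, n)) (eps : R) : Prop :=
  forall w, admissible wbar w -> forall t, (t <= T)%N ->
    entry_le_eps (Dx *m xK A B K w t) dx eps /\
    entry_le_eps (Du *m uK A B K w t) du eps.

Definition dap_loosely_safe n m kx ku (A : 'M[R]_n) (B : 'M[R]_(n, m))
    (Dx : 'M[R]_(kx, n)) (dx : 'cV[R]_kx) (Du : 'M[R]_(ku, m)) (du : 'cV[R]_ku)
    (wbar : R) (T H : nat) (KK : 'M[R]_(m, n)) (M : nat -> 'M[R]_(m, n))
    (eps : R) : Prop :=
  forall w, admissible wbar w -> forall t, (t <= T)%N ->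
    entry_le_eps (Dx *m xM A B H KK M w t) dx eps /\
    entry_le_eps (Du *m uM A B H KK M w t) du eps.

Definition in_Kset n m kx ku A B Dx dx Du du wbar T (K : 'M[R]_(m, n))
    (kappa gamma : R) : Prop :=
  @lin_loosely_safe n m kx ku A B Dx dx Du du wbar T K 0 /\
  strongly_stable A B K kappa gamma.

Definition in_Mset (n m H : nat) (M : nat -> 'M[R]_(m, n)) (kappa gamma : R)
    : Prop :=
  forall i, (1 <= i <= H)%N ->
    ninf (M i) <= 2 * Num.sqrt (n%:R) * kappa ^+ 3 * (1 - gamma) ^+ (i - 1).

Definition MofK (n m : nat) (A : 'M[R]_n) (B : 'M[R]_(n, m))
    (KK K : 'M[R]_(m, n)) : nat -> 'M[R]_(m, n) :=
  fun i => (KK - K) *m (A - B *m K) ^+ (i - 1).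

(* evaluation point (||Dx||_inf, ||Du||_inf, kappa, gamma^-1, wbar) *)
Definition params5 (a b c d e : R) : 'I_5 -> R :=
  fun i => nth 0 [:: a; b; c; d; e] i.

End ControlDefs.

From HB Require Import structures.
From mathcomp Require Import all_boot all_order all_algebra.
From mathcomp Require Import classical_sets reals.
From mathcomp Require mpoly.
From mathcomp Require Import ring lra.
Import Order.TTheory GRing.Theory Num.Theory.
Local Open Scope ring_scope.

Set Implicit Arguments.
Unset Strict Implicit.
Unset Printing Implicit Defensive.

(* With F = A - BK and G = A - B KK, the state under u = -Kx is
   x_t = sum_(i < t) F^i w_(t-1-i), and the disturbance-action policy with
   parameter M(K) feeds back exactly (KK - K) S_t, where S_t keeps only the
   last H terms of that sum.  The truncation error r_t = x_t - S_t obeys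
   r_(t+1) = F r_t + F^H w_(t-H), the state gap e_t = x^K_t - x^M_t obeys
   e_(t+1) = G e_t + (F - G) r_t, and u^K_t - u^M_t = - KK e_t + (KK - K) r_t.
   Strong stability bounds any recursion e_(t+1) = F e_t + f_t started at 0 by
   kappa^2 / gamma * sup |f_t|, and |F^H w| <= kappa^2 (1 - gamma)^H sqrt n wbar,
   so both gaps are O(sqrt n (1 - gamma)^H) in Euclidean norm; the factors
   ||D_x||_inf and ||D_u||_inf convert this into the infinity-norm bound, and
   loose safety follows from the safety of K. *)

Section Norms.
Variable R : realType.

Lemma norm2_ge0 q (x : 'cV[R]_q) : 0 <= norm2 x.
Proof. exact: sqrtr_ge0. Qed.

Lemma norm2_sqr q (x : 'cV[R]_q) : norm2 x ^+ 2 = \sum_j x j 0 ^+ 2.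
Proof. by rewrite sqr_sqrtr // sumr_ge0 // => j _; exact: sqr_ge0. Qed.

Lemma norm_entry_le_norm2 q (x : 'cV[R]_q) i : `|x i 0| <= norm2 x.
Proof.
rewrite -sqrtr_sqr; apply: ler_wsqrtr.
by rewrite (bigD1 i) //= lerDl sumr_ge0 // => j _; exact: sqr_ge0.
Qed.

Lemma norm2_0 q : norm2 (0 : 'cV[R]_q) = 0.
Proof. by rewrite /norm2 big1 ?sqrtr0 // => j _; rewrite mxE expr0n. Qed.

Lemma norm2_eq0 q (x : 'cV[R]_q) : (norm2 x == 0) = (x == 0).
Proof.
apply/eqP/eqP => [x0|->]; last exact: norm2_0.
apply/matrixP => i j; rewrite ord1 mxE.
by apply/eqP; rewrite -normr_le0 -x0 norm_entry_le_norm2.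
Qed.

Lemma norm2_gt0 q (x : 'cV[R]_q) : (0 < norm2 x) = (x != 0).
Proof. by rewrite lt_def norm2_ge0 norm2_eq0 andbT. Qed.

Lemma norm2Z q a (x : 'cV[R]_q) : norm2 (a *: x) = `|a| * norm2 x.
Proof.
rewrite /norm2 -sqrtr_sqr -sqrtrM ?sqr_ge0 // mulr_sumr.
by congr Num.sqrt; apply: eq_bigr => j _; rewrite mxE exprMn.
Qed.

Lemma norm2N q (x : 'cV[R]_q) : norm2 (- x) = norm2 x.
Proof. by rewrite -scaleN1r norm2Z normrN1 mul1r. Qed.

Lemma cauchy_schwarz q (x y : 'cV[R]_q) :
  \sum_j x j 0 * y j 0 <= norm2 x * norm2 y.
Proof.
have [->|x0] := eqVneq x 0.
  by rewrite norm2_0 mul0r big1 // => j _; rewrite mxE mul0r.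
have [->|y0] := eqVneq y 0.
  by rewrite norm2_0 mulr0 big1 // => j _; rewrite mxE mulr0.
set S := \sum_j _; set a := norm2 x; set b := norm2 y.
have sqE : \sum_j (b * x j 0 - a * y j 0) ^+ 2 = 2 * (a * b) * (a * b - S).
  transitivity (\sum_j (b ^+ 2 * x j 0 ^+ 2 - 2 * a * b * (x j 0 * y j 0)
                        + a ^+ 2 * y j 0 ^+ 2)).
    by apply: eq_bigr => j _; ring.
  by rewrite big_split sumrB /= -!mulr_sumr -/S /a /b -!norm2_sqr; ring.
have ab_gt0 : 0 < 2 * (a * b) by rewrite !mulr_gt0 ?norm2_gt0.
have : 0 <= \sum_j (b * x j 0 - a * y j 0) ^+ 2.
  by apply: sumr_ge0 => j _; exact: sqr_ge0.
by rewrite sqE pmulr_rge0 // subr_ge0.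
Qed.

Lemma norm2D q (x y : 'cV[R]_q) : norm2 (x + y) <= norm2 x + norm2 y.
Proof.
rewrite {1}/norm2 -(ger0_norm (addr_ge0 (norm2_ge0 x) (norm2_ge0 y))) -sqrtr_sqr.
apply: ler_wsqrtr.
have -> : \sum_j (x + y) j 0 ^+ 2 =
          norm2 x ^+ 2 + 2 * \sum_j x j 0 * y j 0 + norm2 y ^+ 2.
  rewrite !norm2_sqr mulr_sumr -!big_split /=; apply: eq_bigr => j _.
  by rewrite !mxE; ring.
have := cauchy_schwarz x y; lra.
Qed.

Lemma norm2B q (x y : 'cV[R]_q) : norm2 (x - y) <= norm2 x + norm2 y.
Proof. by rewrite -(norm2N y); exact: norm2D. Qed.

Lemma ninf_ge0 p q (M : 'M[R]_(p, q)) : 0 <= ninf M.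
Proof. exact: bigmax_ge_id. Qed.

Lemma row_sum_le_ninf p q (M : 'M[R]_(p, q)) i : \sum_j `|M i j| <= ninf M.
Proof. exact: (le_bigmax _ (fun i => \sum_j `|M i j|)). Qed.

Lemma norm_entry_le_ninf p (v : 'cV[R]_p) i : `|v i 0| <= ninf v.
Proof. by have := row_sum_le_ninf v i; rewrite big_ord1. Qed.

Lemma norm2_le_ninf q (x : 'cV[R]_q) : norm2 x <= Num.sqrt q%:R * ninf x.
Proof.
rewrite -(ger0_norm (ninf_ge0 x)) -sqrtr_sqr -sqrtrM ?ler0n //.
apply: ler_wsqrtr; rewrite mulr_natl -[X in _ *+ X](card_ord q) -sumr_const.
apply: ler_sum => j _; rewrite -real_normK ?num_real //.
by rewrite lerXn2r ?nnegrE ?normr_ge0 ?ninf_ge0 ?norm_entry_le_ninf.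
Qed.

Lemma ninf_mulmx_le k q (D : 'M[R]_(k, q)) (v : 'cV[R]_q) :
  ninf (D *m v) <= ninf D * norm2 v.
Proof.
apply: bigmax_le => [|i _]; first by rewrite mulr_ge0 ?ninf_ge0 ?norm2_ge0.
rewrite big_ord1 mxE; apply: le_trans (ler_norm_sum _ _ _) _.
apply: le_trans (ler_wpM2r (norm2_ge0 v) (row_sum_le_ninf D i)).
rewrite mulr_suml; apply: ler_sum => j _; rewrite normrM.
by rewrite ler_wpM2l ?norm_entry_le_norm2.
Qed.

Lemma ninf_le_gain k q (M : 'M[R]_(k, q)) c :
  0 <= c -> (forall x, norm2 (M *m x) <= c * norm2 x) ->
  ninf M <= Num.sqrt q%:R * c.
Proof.
move=> c0 Mc; apply: bigmax_le => [|i _]; first by rewrite mulr_ge0 ?sqrtr_ge0.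
(* Test [M] against the sign pattern of its [i]-th row. *)
pose s : 'cV[R]_q := \col_j Num.sg (M i j).
have s_le : norm2 s <= Num.sqrt q%:R.
  apply: le_trans (norm2_le_ninf _) _; rewrite -[leRHS]mulr1.
  apply: ler_wpM2l; first exact: sqrtr_ge0.
  by apply: bigmax_le => // j _; rewrite big_ord1 mxE normr_sg; case: (_ != 0).
have -> : \sum_j `|M i j| = (M *m s) i 0.
  by rewrite mxE; apply: eq_bigr => j _; rewrite mxE normrEsg mulrC.
apply: le_trans (ler_norm _) _; apply: le_trans (norm_entry_le_norm2 _ _) _.
by apply: le_trans (Mc s) _; rewrite mulrC ler_wpM2r.
Qed.

Lemma has_sup_spec_norm p q (M : 'M[R]_(p, q)) :
  has_sup [set norm2 (M *m x) | x in [set x : 'cV[R]_q | norm2 x <= 1]].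
Proof.
split; first by exists 0; exists 0; rewrite /= ?mulmx0 norm2_0.
exists (Num.sqrt p%:R * ninf M) => _ [x /= x1 <-].
apply: le_trans (norm2_le_ninf _) _; apply: ler_wpM2l; first exact: sqrtr_ge0.
apply: le_trans (ninf_mulmx_le _ _) _.
by rewrite -[leRHS]mulr1 ler_wpM2l ?ninf_ge0.
Qed.

Lemma spec_norm_ge0 p q (M : 'M[R]_(p, q)) : 0 <= spec_norm M.
Proof.
apply: sup_upper_bound (has_sup_spec_norm M) _ _.
by exists 0; rewrite /= ?mulmx0 norm2_0.
Qed.

Lemma norm2_mulmx_le p q (M : 'M[R]_(p, q)) c x :
  spec_norm M <= c -> norm2 (M *m x) <= c * norm2 x.
Proof.
move=> Mc; have [->|x0] := eqVneq x 0; first by rewrite mulmx0 !norm2_0 mulr0.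
have x_gt0 : 0 < norm2 x by rewrite norm2_gt0.
pose y := (norm2 x)^-1 *: x.
have y1 : norm2 y = 1.
  by rewrite norm2Z ger0_norm ?invr_ge0 ?norm2_ge0 ?mulVf ?gt_eqF.
have My_le : norm2 (M *m y) <= c.
  apply: le_trans Mc; apply: sup_upper_bound (has_sup_spec_norm M) _ _.
  by exists y; rewrite //= y1.
have -> : M *m x = norm2 x *: (M *m y).
  by rewrite -scalemxAr scalerA divff ?gt_eqF ?scale1r.
by rewrite norm2Z ger0_norm ?norm2_ge0 // mulrC ler_wpM2r ?norm2_ge0.
Qed.

Lemma norm2_mulmx_pow_le q (M : 'M[R]_q) c k x :
  spec_norm M <= c -> norm2 (M ^+ k *m x) <= c ^+ k * norm2 x.
Proof.
move=> Mc; have c0 := le_trans (spec_norm_ge0 M) Mc.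
elim: k => [|k IHk]; first by rewrite !expr0 mul1r mul1mx.
rewrite exprS -mulmxE -mulmxA exprS -mulrA.
exact: le_trans (norm2_mulmx_le _ Mc) (ler_wpM2l c0 IHk).
Qed.

End Norms.

Section StronglyStable.
Variables (R : realType) (n m : nat) (A : 'M[R]_n) (B : 'M[R]_(n, m)).
Variables (K : 'M[R]_(m, n)) (kappa gamma : R).
Hypothesis stabK : strongly_stable A B K kappa gamma.
Local Notation F := (A - B *m K).

Lemma strongly_stable_kappa_ge0 : 0 <= kappa.
Proof. by case: stabK => Q [L [_ _ _ [_ _ /(le_trans (spec_norm_ge0 K))]]]. Qed.

Lemma strongly_stable_gamma_le1 : gamma <= 1.
Proof.
by case: stabK => Q [L [_ _ /(le_trans (spec_norm_ge0 L))]]; rewrite subr_ge0.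
Qed.

Lemma norm2_gain_le x : norm2 (K *m x) <= kappa * norm2 x.
Proof. by case: stabK => Q [L [_ _ _ [_ _ /norm2_mulmx_le]]]. Qed.

Lemma norm2_closed_loop_pow_le k x :
  norm2 (F ^+ k *m x) <= kappa ^+ 2 * (1 - gamma) ^+ k * norm2 x.
Proof.
case: stabK => Q [L [Qu FE L_le [Q_le Qi_le _]]].
have k0 := strongly_stable_kappa_ge0.
have QF : Q *m F = L *m Q by rewrite FE !mulmxA mulmxV // mul1mx.
have QFk : Q *m F ^+ k = L ^+ k *m Q.
  elim: k {x} => [|k IHk]; first by rewrite !expr0 mulmx1 mul1mx.
  by rewrite exprS -mulmxE mulmxA QF -mulmxA IHk mulmxA mulmxE -exprS.
have -> : F ^+ k *m x = invmx Q *m (L ^+ k *m (Q *m x)).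
  by rewrite mulmxA -QFk !mulmxA mulVmx // mul1mx.
apply: le_trans (norm2_mulmx_le _ Qi_le) _.
rewrite expr2 -!mulrA (ler_wpM2l k0) //.
apply: le_trans (norm2_mulmx_pow_le k _ L_le) _.
rewrite mulrCA; apply: ler_wpM2l; last exact: norm2_mulmx_le.
by rewrite exprn_ge0 // subr_ge0 strongly_stable_gamma_le1.
Qed.

(* In the coordinates [Q e], [F] acts as [L], a contraction by [1 - gamma]. *)
Lemma stable_recursion_le (e f : nat -> 'cV[R]_n) c :
  0 < gamma -> e 0%N = 0 -> (forall t, e t.+1 = F *m e t + f t) ->
  (forall t, norm2 (f t) <= c) -> forall t, norm2 (e t) <= kappa ^+ 2 / gamma * c.
Proof.
move=> g0 e0 eS f_le t.
have c0 : 0 <= c := le_trans (norm2_ge0 _) (f_le 0%N).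
have k0 := strongly_stable_kappa_ge0.
case: stabK => Q [L [Qu FE L_le [Q_le Qi_le _]]].
have QF : Q *m F = L *m Q by rewrite FE !mulmxA mulmxV // mul1mx.
have Qe_le s : norm2 (Q *m e s) <= kappa / gamma * c.
  elim: s => [|s IHs].
    by rewrite e0 mulmx0 norm2_0 (mulr_ge0 (divr_ge0 k0 (ltW g0)) c0).
  rewrite eS mulmxDr mulmxA QF -mulmxA; apply: le_trans (norm2D _ _) _.
  have g1 : 0 <= 1 - gamma by rewrite subr_ge0 strongly_stable_gamma_le1.
  apply: (@le_trans _ _ ((1 - gamma) * (kappa / gamma * c) + kappa * c)).
    apply: lerD; first exact: le_trans (norm2_mulmx_le _ L_le) (ler_wpM2l g1 IHs).
    exact: le_trans (norm2_mulmx_le _ Q_le) (ler_wpM2l k0 (f_le s)).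
  rewrite [leLHS](_ : _ = kappa / gamma * c) //.
  by field; rewrite gt_eqF.
have -> : e t = invmx Q *m (Q *m e t) by rewrite mulmxA mulVmx // mul1mx.
apply: le_trans (norm2_mulmx_le _ Qi_le) _.
by rewrite expr2 -!mulrA (ler_wpM2l k0) // mulrA Qe_le.
Qed.

End StronglyStable.

Lemma MofK_in_Mset (R : realType) n m H (A : 'M[R]_n) (B : 'M[R]_(n, m))
    (KK K : 'M[R]_(m, n)) kappa gamma :
  strongly_stable A B KK kappa gamma -> strongly_stable A B K kappa gamma ->
  in_Mset H (MofK A B KK K) kappa gamma.
Proof.
move=> stabKK stabK i _.
have k0 := strongly_stable_kappa_ge0 stabK.
have q0 : 0 <= (1 - gamma) ^+ (i - 1).
  by rewrite exprn_ge0 // subr_ge0 (strongly_stable_gamma_le1 stabK).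
have -> : 2 * Num.sqrt n%:R * kappa ^+ 3 * (1 - gamma) ^+ (i - 1) =
          Num.sqrt n%:R * (2 * kappa ^+ 3 * (1 - gamma) ^+ (i - 1)) by ring.
apply: ninf_le_gain => [|x].
  exact: mulr_ge0 (mulr_ge0 (ler0n _ 2) (exprn_ge0 _ k0)) q0.
rewrite /MofK -mulmxA mulmxBl; set y := _ *m x.
apply: le_trans (norm2B _ _) _.
have := norm2_gain_le stabKK y; have := norm2_gain_le stabK y.
have := norm2_closed_loop_pow_le stabK (i - 1) x.
have := norm2_ge0 x; have := norm2_ge0 y.
nra.
Qed.

Definition trunc_resp (R : realType) n (F : 'M[R]_n) (w : nat -> 'cV[R]_n) H t
    : 'cV[R]_n :=
  \sum_(i < H) F ^+ i *m wpast w t i.+1.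

Section TruncResp.
Variables (R : realType) (n : nat) (F : 'M[R]_n) (w : nat -> 'cV[R]_n).

Lemma trunc_resp0 H : trunc_resp F w H 0 = 0.
Proof. by rewrite /trunc_resp big1 // => i _; rewrite /wpast /= mulmx0. Qed.

Lemma trunc_respS H t :
  trunc_resp F w H t.+1 + F ^+ H *m wpast w t H = w t + F *m trunc_resp F w H t.
Proof.
case: H => [|H].
  by rewrite /trunc_resp !big_ord0 expr0 mul1mx mulmx0 add0r addr0 /wpast subn0.
rewrite /trunc_resp big_ord_recl expr0 mul1mx {1}/wpast /= subSS subn0.
rewrite mulmx_sumr big_ord_recr /= -addrA; congr (_ + (_ + _)).
  by apply: eq_bigr => i _; rewrite mulmxA mulmxE -exprS /wpast ltnS subSS.
by rewrite mulmxA mulmxE -exprS.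
Qed.

End TruncResp.

(* [mxE] expands matrix products into sums, which [lra] treats as atoms. *)
Ltac mx_lra := apply/matrixP => ? ?; rewrite !mxE; lra.

Section ClosedLoops.
Variables (R : realType) (n m H : nat) (A : 'M[R]_n) (B : 'M[R]_(n, m)).
Variables (KK K : 'M[R]_(m, n)) (w : nat -> 'cV[R]_n).
Local Notation F := (A - B *m K).
Local Notation G := (A - B *m KK).
Local Notation x t := (xK A B K w t).
Local Notation xD t := (xM A B H KK (MofK A B KK K) w t).
Local Notation S t := (trunc_resp F w H t).

Lemma xK_rec t : x t.+1 = F *m x t + w t.
Proof. by rewrite /xK /= /lin_pol mulmxBl mulmxN mulmxA. Qed.

Lemma dap_pol_MofK t v :
  dap_pol H KK (MofK A B KK K) w t v = - (KK *m v) + (KK - K) *m S t.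
Proof.
congr (_ + _); rewrite big_add1 big_mkord mulmx_sumr; apply: eq_bigr => i _.
by rewrite /MofK subSS subn0 mulmxA.
Qed.

Lemma trunc_error_rec t :
  x t.+1 - S t.+1 = F *m (x t - S t) + F ^+ H *m wpast w t H.
Proof.
have SE := trunc_respS F w H t.
rewrite xK_rec mulmxBr -[S t.+1](addrK (F ^+ H *m wpast w t H)) SE.
mx_lra.
Qed.

Lemma state_gap_rec t :
  x t.+1 - xD t.+1 = G *m (x t - xD t) + (F *m (x t - S t) - G *m (x t - S t)).
Proof.
rewrite xK_rec {1}/xM /= dap_pol_MofK -/(xM _ _ _ _ _ _ t).
rewrite ?(mulmxBl, mulmxBr, mulmxDr, mulmxDl, mulmxN, mulNmx) ?mulmxA.
mx_lra.
Qed.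

Lemma input_gap_eq t :
  uK A B K w t - uM A B H KK (MofK A B KK K) w t =
  - (KK *m (x t - xD t)) + (KK *m (x t - S t) - K *m (x t - S t)).
Proof.
rewrite /uK /uM /lin_pol dap_pol_MofK.
rewrite ?(mulmxBl, mulmxBr, mulmxDr, mulmxDl, mulmxN, mulNmx) ?mulmxA.
mx_lra.
Qed.

End ClosedLoops.

Lemma admissible_ge0 (R : realType) n wbar (w : nat -> 'cV[R]_n) :
  admissible wbar w -> 0 <= wbar.
Proof. by move/(_ 0%N); apply: le_trans (ninf_ge0 _). Qed.

Lemma norm2_wpast_le (R : realType) n wbar (w : nat -> 'cV[R]_n) t i :
  admissible wbar w -> norm2 (wpast w t i) <= Num.sqrt n%:R * wbar.
Proof.
move=> adm; rewrite /wpast; case: ifP => _.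
  exact: le_trans (norm2_le_ninf _) (ler_wpM2l (sqrtr_ge0 _) (adm _)).
by rewrite norm2_0 mulr_ge0 ?sqrtr_ge0 ?(admissible_ge0 adm).
Qed.

Section DapGap.
Variables (R : realType) (n m H : nat) (A : 'M[R]_n) (B : 'M[R]_(n, m)).
Variables (KK K : 'M[R]_(m, n)) (kappa gamma wbar : R) (w : nat -> 'cV[R]_n).
Hypothesis stabKK : strongly_stable A B KK kappa gamma.
Hypothesis stabK : strongly_stable A B K kappa gamma.
Hypotheses (gamma_gt0 : 0 < gamma) (kappa_ge1 : 1 <= kappa).
Hypothesis w_adm : admissible wbar w.
Local Notation F := (A - B *m K).
Local Notation X := (Num.sqrt n%:R * (1 - gamma) ^+ H).
Local Notation r t := (xK A B K w t - trunc_resp F w H t).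
Local Notation e t := (xK A B K w t - xM A B H KK (MofK A B KK K) w t).

Lemma trunc_error_le t : norm2 (r t) <= kappa ^+ 4 * gamma^-1 * wbar * X.
Proof.
have -> : kappa ^+ 4 * gamma^-1 * wbar * X =
          kappa ^+ 2 / gamma *
          (kappa ^+ 2 * (1 - gamma) ^+ H * (Num.sqrt n%:R * wbar)).
  by ring.
apply: (stable_recursion_le (e := fun t => r t)
         (f := fun t => F ^+ H *m wpast w t H) stabK gamma_gt0).
- by rewrite /xK /= trunc_resp0 subr0.
- exact: trunc_error_rec.
- move=> s; apply: le_trans (norm2_closed_loop_pow_le stabK _ _) _.
  rewrite ler_wpM2l ?norm2_wpast_le // mulr_ge0 ?exprn_ge0
          ?(strongly_stable_kappa_ge0 stabK) //.
  by rewrite subr_ge0 (strongly_stable_gamma_le1 stabK).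
Qed.

Lemma state_gap_le t : norm2 (e t) <= 2 * kappa ^+ 8 * gamma^-1 ^+ 2 * wbar * X.
Proof.
have -> : 2 * kappa ^+ 8 * gamma^-1 ^+ 2 * wbar * X =
          kappa ^+ 2 / gamma *
          (2 * (kappa ^+ 2 * (kappa ^+ 4 * gamma^-1 * wbar * X))).
  by ring.
apply: (stable_recursion_le (e := fun t => e t)
         (f := fun t => F *m r t - (A - B *m KK) *m r t) stabKK gamma_gt0).
- by rewrite /xK /xM /= subr0.
- exact: state_gap_rec.
move=> s /=; apply: le_trans (norm2B _ _) _.
have r_le := trunc_error_le s.
have gain_le K' : strongly_stable A B K' kappa gamma ->
    norm2 ((A - B *m K') *m r s) <=
    kappa ^+ 2 * (kappa ^+ 4 * gamma^-1 * wbar * X).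
  move=> stabK'; have := norm2_closed_loop_pow_le stabK' 1 (r s).
  rewrite expr1 -mulrA => /le_trans; apply; rewrite ler_wpM2l ?exprn_ge0 //.
    exact: strongly_stable_kappa_ge0 stabK'.
  by apply: le_trans r_le; rewrite ler_piMl ?norm2_ge0 // gerBl ltW.
have := gain_le _ stabK; have := gain_le _ stabKK; lra.
Qed.

Lemma dap_gap_le t :
  norm2 (e t) <= 4 * kappa ^+ 9 * gamma^-1 ^+ 2 * wbar * X /\
  norm2 (uK A B K w t - uM A B H KK (MofK A B KK K) w t)
    <= 4 * kappa ^+ 9 * gamma^-1 ^+ 2 * wbar * X.
Proof.
have r_le := trunc_error_le t.
set rho := kappa ^+ 4 * gamma^-1 * wbar * X in r_le *.
have rho0 : 0 <= rho := le_trans (norm2_ge0 _) r_le.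
have k0 : 0 <= kappa := le_trans ler01 kappa_ge1.
have d1 : 1 <= gamma^-1.
  by rewrite invf_ge1 // (strongly_stable_gamma_le1 stabK).
have E4 : 4 * kappa ^+ 9 * gamma^-1 ^+ 2 * wbar * X =
          4 * (kappa ^+ 5 * gamma^-1 * rho).
  by rewrite /rho; ring.
have e_le : norm2 (e t) <= 2 * (kappa ^+ 4 * gamma^-1 * rho).
  apply: le_trans (state_gap_le t) _.
  by rewrite [leLHS](_ : _ = 2 * (kappa ^+ 4 * gamma^-1 * rho)) // /rho; ring.
have k4_le : kappa ^+ 4 * gamma^-1 * rho <= kappa ^+ 5 * gamma^-1 * rho.
  apply: (ler_wpM2r rho0); apply: ler_wpM2r; first by rewrite invr_ge0 ltW.
  by rewrite ler_weXn2l.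
have k_le : kappa * rho <= kappa ^+ 5 * gamma^-1 * rho.
  apply: (ler_wpM2r rho0); rewrite -[leLHS]expr1.
  apply: (@le_trans _ _ (kappa ^+ 5)); first by rewrite ler_weXn2l.
  by rewrite ler_peMr ?exprn_ge0.
rewrite E4; split; first by have := norm2_ge0 (e t); lra.
rewrite input_gap_eq; apply: le_trans (norm2D _ _) _; rewrite norm2N.
have := norm2_gain_le stabKK (e t); have := norm2_gain_le stabKK (r t).
have := norm2_gain_le stabK (r t); have := norm2B (KK *m r t) (K *m r t).
have := ler_wpM2l k0 e_le; have := ler_wpM2l k0 r_le.
lra.
Qed.

End DapGap.

Lemma entry_le_eps_gap (R : realType) k (a b d : 'cV[R]_k) eps :
  entry_le_eps a d 0 -> ninf (a - b) <= eps -> entry_le_eps b d eps.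
Proof.
move=> ad ab i; have := ad i.
move: (le_trans (norm_entry_le_ninf (a - b) i) ab); rewrite ler_norml !mxE.
by case/andP => *; lra.
Qed.

Section C3Poly.
Import mpoly.
Variable R : realType.

Definition c3_poly : {mpoly R[5]} :=
  1 + ('X_(@Ordinal 5 0 isT) + 'X_(@Ordinal 5 1 isT)) *
      (4 * 'X_(@Ordinal 5 2 isT) ^+ 9 * 'X_(@Ordinal 5 3 isT) ^+ 2
         * 'X_(@Ordinal 5 4 isT)).

Lemma meval_c3_poly (a b c d e : R) :
  meval (params5 a b c d e) c3_poly = 1 + (a + b) * (4 * c ^+ 9 * d ^+ 2 * e).
Proof.
rewrite /c3_poly !(rmorphXn, rmorphD, rmorphM, rmorph1) /= !mevalXU /params5 /=.
ring.
Qed.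

End C3Poly.

Theorem lemma4 (R : realType) :
  exists P : mpoly.mpoly 5 R,
  forall (n m kx ku T H : nat) (A : 'M[R]_n) (B : 'M[R]_(n, m))
    (Dx : 'M[R]_(kx, n)) (dx : 'cV[R]_kx) (Du : 'M[R]_(ku, m)) (du : 'cV[R]_ku)
    (wbar kappa gamma : R) (KK K : 'M[R]_(m, n)),
  0 < gamma < 1 -> 1 <= kappa -> 0 < wbar ->
  strongly_stable A B KK kappa gamma ->
  in_Kset A B Dx dx Du du wbar T K kappa gamma ->
  let c3 := mpoly.meval (params5 (ninf Dx) (ninf Du) kappa gamma^-1 wbar) P in
  let eps3 := c3 * Num.sqrt (n%:R) * (1 - gamma) ^+ H in
  [/\ 0 < c3,
      in_Mset H (MofK A B KK K) kappa gamma,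
      (forall w, admissible wbar w -> forall t, (t <= T)%N ->
         Num.max (ninf (Dx *m (xK A B K w t - xM A B H KK (MofK A B KK K) w t)))
                 (ninf (Du *m (uK A B K w t - uM A B H KK (MofK A B KK K) w t)))
         <= eps3) &
      dap_loosely_safe A B Dx dx Du du wbar T H KK (MofK A B KK K) eps3].
Proof.
exists (c3_poly R).
move=> n m kx ku T H A B Dx dx Du du wbar kappa gamma KK K /andP[g0 g1] k1 w0.
move=> stabKK [safeK stabK] c3 eps3.
set C := 4 * kappa ^+ 9 * gamma^-1 ^+ 2 * wbar.
have C0 : 0 <= C.
  by rewrite !mulr_ge0 ?ler0n ?exprn_ge0 ?invr_ge0 ?(ltW g0) ?(ltW w0)
             ?(le_trans ler01 k1).
have c3E : c3 = 1 + (ninf Dx + ninf Du) * C by rewrite /c3 meval_c3_poly.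
have X0 : 0 <= Num.sqrt n%:R * (1 - gamma) ^+ H.
  by rewrite mulr_ge0 ?sqrtr_ge0 // exprn_ge0 // subr_ge0 (ltW g1).
have gap_le_eps3 k (D : 'M[R]_(k, _)) v : ninf D <= ninf Dx + ninf Du ->
    norm2 v <= C * (Num.sqrt n%:R * (1 - gamma) ^+ H) -> ninf (D *m v) <= eps3.
  move=> D_le v_le; apply: le_trans (ninf_mulmx_le D v) _.
  rewrite /eps3 -mulrA c3E.
  have := ler_wpM2l (ninf_ge0 D) v_le; have := ler_wpM2r C0 D_le.
  nra.
have gap_le w : admissible wbar w -> forall t,
    ninf (Dx *m (xK A B K w t - xM A B H KK (MofK A B KK K) w t)) <= eps3 /\
    ninf (Du *m (uK A B K w t - uM A B H KK (MofK A B KK K) w t)) <= eps3.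
  move=> adm t; have [ex eu] := dap_gap_le H stabKK stabK g0 k1 adm t.
  by split; apply: gap_le_eps3; rewrite // ?lerDl ?lerDr ninf_ge0.
split.
- by rewrite c3E ltr_wpDr // mulr_ge0 // addr_ge0 ?ninf_ge0.
- exact: MofK_in_Mset.
- by move=> w adm t _; rewrite ge_max; apply/andP; exact: gap_le.
- move=> w adm t tT; have [sx su] := safeK w adm t tT.
  have [gx gu] := gap_le w adm t.
  by split; [apply: entry_le_eps_gap sx _ | apply: entry_le_eps_gap su _];
     rewrite -mulmxBr.
Qed.
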